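(* Let $X_1,\ldots,X_d$ be $d$ disjoint sets and let $a_1,\ldots,a_d,b_1,\ldots,b_d$ be nonnegative integers. Suppose $A_1,\ldots,A_h$ and $B_1,\ldots,B_h$ are two families of subsets of $X_1\cup\cdots\cup X_d$ that satisfy: (1) $A_i\cap B_i=\emptyset$ for every $1\le i\le h$; (2) $A_i\cap B_j\neq\emptyset$ for every $1\le i<j\le h$; (3) for every $1\le i\le h$ and $1\le j\le d$ we have $|B_i\cap X_j|\le b_j$; (4) for every $1\le i\le h$ there is a permutation $\pi:[d]\to[d]$ such that for every $1\le j\le d$ we have $|A_i\cap X_j|\le a_{\pi(j)}$. Then $h\le Q(a_1,\ldots,a_d,b_1,\ldots,b_d)$, where $Q(a_1,\ldots,a_d,b_1,\ldots,b_d)$ is defined as follows: put $a:=\max_i a_i$, take disjoint sets $U_1,\ldots,U_d$ with $|U_i|=a+b_i$, identifying each $U_i$ with $[a+b_i]=\{1,\ldots,a+b_i\}$; then $Q(a_1,\ldots,a_d,b_1,\ldots,b_d)$ is the number of sets $S\subseteq U_1\cup\cdots\cup U_d$ for which there is a permutation $\pi:[d]\to[d]$ such that, for every $i$, $S\cap U_i$ is a subset of $[a_{\pi(i)}+b_i]$ of size $b_i$. Moreover, this bound is best possible for every choice of $a_1,\ldots,a_d$ and $b_1,\ldots,b_d$.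
   Context: $[n]$ denotes $\{1,\ldots,n\}$. This is a multi-partite variant of Bollobás's Two Families Theorem; it differs from Alon's multi-partite Two Families Theorem (which gives $h\le\prod_{j=1}^d\binom{a_j+b_j}{b_j}$) in that the permutation $\pi$ in condition (4) may depend on $i$ rather than being the identity. *)

From mathcomp Require Import all_boot fingroup perm.
Set Implicit Arguments. Unset Strict Implicit. Unset Printing Implicit Defensive.

Definition pairwise_disjoint (T : finType) (d : nat) (X : 'I_d -> {set T}) :=
  forall j k : 'I_d, j != k -> [disjoint X j & X k].

Definition two_families (T : finType) (d h : nat) (X : 'I_d -> {set T})
    (a b : 'I_d -> nat) (A B : 'I_h -> {set T}) : Prop :=
     (forall i, A i \subset \bigcup_(j < d) X j) /\
      (forall i, B i \subset \bigcup_(j < d) X j) /\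
      (forall i, [disjoint A i & B i]) /\
      (forall i j : 'I_h, i < j -> A i :&: B j != set0) /\
      (forall (i : 'I_h) (j : 'I_d), #|B i :&: X j| <= b j) /\
      (forall i : 'I_h, exists pi : {perm 'I_d},
          forall j : 'I_d, #|A i :&: X j| <= a (pi j)).

Definition amax (d : nat) (a : 'I_d -> nat) : nat := \max_(i < d) a i.

(* U_1 + ... + U_d, with U_i identified with [a + b_i] (here 'I_(a+b_i),
   i.e. {0,...,a+b_i-1}). *)
Definition Uspace (d : nat) (a b : 'I_d -> nat) : finType :=
  {i : 'I_d & 'I_(amax a + b i)}.

Definition Uslice (d : nat) (a b : 'I_d -> nat) (S : {set Uspace a b})
    (i : 'I_d) : {set 'I_(amax a + b i)} :=
  [set x | (Tagged (fun i => 'I_(amax a + b i)) x : Uspace a b) \in S].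

Definition Qgood (d : nat) (a b : 'I_d -> nat) (S : {set Uspace a b}) : bool :=
  [exists pi : {perm 'I_d}, forall i : 'I_d,
    (Uslice S i \subset [set x : 'I_(amax a + b i) | x < a (pi i) + b i])
    && (#|Uslice S i| == b i)].

Definition Q (d : nat) (a b : 'I_d -> nat) : nat :=
  #|[set S : {set Uspace a b} | Qgood S]|.

From mathcomp Require Import all_boot all_algebra fingroup perm.
Set Implicit Arguments. Unset Strict Implicit. Unset Printing Implicit Defensive.
Import GRing.Theory Num.Theory.

(* Lower bound: take for B the Q-good sets S in order of decreasing position
   sum, and for A(S) the allowed prefix [a_{pi j} + b_j] of every block minus S.
   If A(S) misses S', then in each block every point of S \ S' lies below the
   prefix bound while every point of S' \ S lies above it, so S' has a strictly
   larger position sum unless S' = S.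

   Upper bound: code the points of T by distinct rationals. For i, k build a
   block-diagonal matrix over U whose block j has Vandermonde columns at the
   points of A_i in X_j (padded by fresh points and unit columns) and at the
   points of B_k in X_j. Its determinant P_ik vanishes for i < k, as a common
   point gives two equal columns, and not for i = k, by counting roots of a
   polynomial; hence rank P = h. Expanding along the B-columns writes
   P = sum_f u_f v_f^T, where u_f depends, up to a scalar, only on the image S
   of f and vanishes unless S is Q-good; hence rank P <= Q. *)

Section ColumnExpansion.
Local Open Scope ring_scope.
Variables (R : comPzRingType) (n : nat) (kept : pred 'I_n).

Lemma det_eq0_eq_col (A : 'M[R]_n) c1 c2 :
  c1 != c2 -> (forall r, A r c1 = A r c2) -> \det A = 0.
Proof.
move=> ne eqc; rewrite -det_tr; apply: (determinant_alternate ne) => r.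
by rewrite !mxE.
Qed.

Definition unit_cols (C : 'M[R]_n) (f : 'I_n -> 'I_n) : 'M[R]_n :=
  \matrix_(r, c) if kept c then C r c else (r == f c)%:R.

Definition unit_cols_weight (C : 'M[R]_n) (f : 'I_n -> 'I_n) : R :=
  \prod_c (if kept c then (f c == c)%:R else C (f c) c).

(* Multilinearity along the columns outside [kept]; the factor [(f c == c)%:R]
   restricts the sum to maps fixing the kept columns. *)
Lemma det_unit_cols_expand C :
  \det C = \sum_(f : {ffun 'I_n -> 'I_n}) unit_cols_weight C f * \det (unit_cols C f).
Proof.
rewrite -det_tr.
under [in RHS]eq_bigr => f _ do rewrite -det_tr.
rewrite /determinant.
under eq_bigr => f _ do rewrite big_distrr /=.
rewrite exchange_big /=; apply: eq_bigr => s _.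
under [in RHS]eq_bigr => f _ do rewrite mulrCA.
rewrite -big_distrr /=; congr (_ * _).
under [in RHS]eq_bigr => f _ do rewrite /unit_cols_weight -big_split /=.
under [in RHS]eq_bigr => f _ do under eq_bigr => c _ do rewrite !mxE.
rewrite -(bigA_distr_bigA (fun c q => (if kept c then (q == c)%:R else C q c) *
     (if kept c then C (s c) c else (s c == q)%:R))) /=.
apply: eq_bigr => c _; rewrite !mxE.
case: (kept c).
  rewrite (bigD1 c) //= eqxx mul1r big1 ?addr0 // => q /negbTE ->.
  by rewrite mul0r.
rewrite (bigD1 (s c)) //= eqxx mulr1 big1 ?addr0 // => q.
by rewrite eq_sym => /negbTE ->; rewrite mulr0.
Qed.

Lemma det_unit_cols_image (f f' : 'I_n -> 'I_n) :
  {in [set c | ~~ kept c] &, injective f} ->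
  f @: [set c | ~~ kept c] = f' @: [set c | ~~ kept c] ->
  exists e : R, forall C, \det (unit_cols C f) = e * \det (unit_cols C f').
Proof.
move=> injf eqim.
pose sg c := if kept c then c else odflt c [pick c' | ~~ kept c' & f' c' == f c].
have sgP c : ~~ kept c -> ~~ kept (sg c) /\ f' (sg c) = f c.
  move=> Nc; rewrite /sg (negbTE Nc).
  have : f c \in f' @: [set c | ~~ kept c] by rewrite -eqim imset_f // inE.
  case/imsetP => c0 Nc0 e0.
  case: pickP => [c' /andP[-> /eqP ->] // | /(_ c0)].
  by rewrite inE in Nc0; rewrite Nc0 e0 eqxx.
have sg_inj : injective sg.
  move=> c1 c2; case N1: (kept c1); case N2: (kept c2).
  - by rewrite /sg N1 N2.
  - by have [+ _] := sgP c2 (negbT N2); rewrite /sg N1 => + e; rewrite -e N1.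
  - by have [+ _] := sgP c1 (negbT N1); rewrite /sg N2 => + e; rewrite e N2.
  have [_ e1] := sgP c1 (negbT N1); have [_ e2] := sgP c2 (negbT N2).
  by move=> e; apply: injf; rewrite ?inE ?N1 ?N2 // -e1 -e2 e.
pose s := perm sg_inj.
exists (\det (perm_mx (s^-1)%g)) => C.
have -> : unit_cols C f = col_perm s (unit_cols C f').
  apply/matrixP => r c; rewrite !mxE permE.
  case N: (kept c); first by rewrite /sg N N.
  by have [/negbTE -> e] := sgP c (negbT N); rewrite e.
by rewrite col_permE det_mulmx mulrC.
Qed.

End ColumnExpansion.

Section BlockCoordinates.
Variables (d : nat) (a b : 'I_d -> nat).
Local Notation U := (Uspace a b).
Local Notation n := #|U|.

Definition elt (r : 'I_n) : U := enum_val r.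
Definition blk (r : 'I_n) : 'I_d := tag (elt r).
Definition pos (r : 'I_n) : nat := tagged (elt r).
Definition ord_of (j : 'I_d) (q : 'I_(amax a + b j)) : 'I_n :=
  enum_rank (Tagged (fun i => 'I_(amax a + b i)) q : U).
Arguments ord_of j q : clear implicits.

Lemma blk_ord_of j q : blk (ord_of j q) = j.
Proof. by rewrite /blk /elt /ord_of enum_rankK. Qed.

Lemma pos_ord_of j q : pos (ord_of j q) = q.
Proof. by rewrite /pos /elt /ord_of enum_rankK. Qed.

Lemma blk_pos_inj r1 r2 : blk r1 = blk r2 -> pos r1 = pos r2 -> r1 = r2.
Proof.
move=> eb ep; apply: enum_val_inj; move: eb ep; rewrite /blk /pos /elt.
by case: (enum_val r1) (enum_val r2) => [j q] [j' q'] /= ej; subst j' => /val_inj ->.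
Qed.

Lemma pos_lt r : pos r < amax a + b (blk r).
Proof. by rewrite /pos /blk; case: (elt r). Qed.

(* The columns of block j with position below [amax a] will carry the sets A_i,
   the remaining b_j ones the sets B_k. *)
Definition acol (c : 'I_n) : bool := pos c < amax a.
Definition bcols : {set 'I_n} := [set c | ~~ acol c].

Lemma card_Uslice (S : {set U}) j : #|Uslice S j| = #|[set y in S | tag y == j]|.
Proof.
have -> : [set y in S | tag y == j] =
    [set (Tagged (fun i => 'I_(amax a + b i)) q : U) | q in Uslice S j].
  apply/setP => y; rewrite !inE; apply/andP/imsetP.
    by case: y => j' q /= [yS /eqP ej]; subst j; exists q; rewrite ?inE.
  by case=> q; rewrite inE => qS ->; rewrite qS /=.
rewrite card_imset // => q1 q2 /(congr1 (fun z : U => val (tagged z))) /= /val_inj //.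
Qed.

Lemma card_bcols_blk j : #|[set c in bcols | blk c == j]| = b j.
Proof.
have -> : [set c in bcols | blk c == j] =
    [set ord_of j (rshift (amax a) l) | l : 'I_(b j)].
  apply/setP => c; rewrite !inE; apply/andP/imsetP.
    rewrite /acol -leqNgt => -[le /eqP ej].
    have lt : pos c - amax a < b j by rewrite ltn_subLR // -ej pos_lt.
    exists (Ordinal lt) => //.
    by apply: blk_pos_inj; rewrite ?blk_ord_of ?pos_ord_of //= subnKC.
  by case=> l _ ->; rewrite /acol blk_ord_of pos_ord_of /= eqxx -leqNgt leq_addr.
rewrite card_imset ?card_ord // => l1 l2 /(congr1 pos); rewrite !pos_ord_of /=.
by move=> /eqP; rewrite eqn_add2l => /eqP /val_inj.
Qed.

End BlockCoordinates.
Arguments ord_of {d a b} j q.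
Arguments elt {d a b} r.
Arguments blk {d a b} r.
Arguments pos {d a b} r.
Arguments acol {d a b} c.
Arguments bcols {d} a b.

Lemma card_ord_lt N m : #|[set q : 'I_N | q < m]| <= m.
Proof.
rewrite cardE -(size_map val) -[X in _ <= X](size_iota 0).
apply: uniq_leq_size; first by rewrite map_inj_uniq ?enum_uniq //; exact: val_inj.
by move=> x /mapP [q]; rewrite mem_enum inE => lt ->; rewrite mem_iota.
Qed.

(* Each point of [s :\: s'] is below [m] and is traded for a point of
   [s' :\: s] that is at least [m]. *)
Lemma leq_sum_setD_shift N (s s' : {set 'I_N}) m :
  #|s| = #|s'| -> {in s, forall q : 'I_N, q < m} -> {in s', forall q : 'I_N, q < m -> q \in s} ->
  \sum_(q in s) (q : nat) + #|s :\: s'| <= \sum_(q in s') (q : nat).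
Proof.
move=> cs hs hs'.
rewrite (big_setID s') [X in _ <= X](big_setID s) setIC /= -addnA leq_add2l.
have e : #|s :\: s'| = #|s' :\: s|.
  by apply/eqP; rewrite -(eqn_add2l #|s :&: s'|) cardsID setIC cardsID cs.
apply: (@leq_trans (#|s :\: s'| * m)).
  rewrite -sum_nat_const -sum1_card -big_split /=; apply: leq_sum => q.
  by rewrite inE => /andP [_ qs]; rewrite addn1 hs.
rewrite e -sum_nat_const; apply: leq_sum => q; rewrite inE => /andP [nqs qs'].
by rewrite leqNgt; apply/negP => lt; move: nqs; rewrite hs'.
Qed.

Section LowerBound.
Variables (d : nat) (a b : 'I_d -> nat).
Local Notation U := (Uspace a b).
Local Notation QS := [set S : {set U} | Qgood S].

Definition Qgood_for (S : {set U}) (pi : {perm 'I_d}) : bool :=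
  [forall i, (Uslice S i \subset [set x : 'I_(amax a + b i) | x < a (pi i) + b i])
               && (#|Uslice S i| == b i)].

Definition Qperm (S : {set U}) : {perm 'I_d} := odflt 1%g [pick pi | Qgood_for S pi].

Lemma Qgood_Qperm S : Qgood S -> Qgood_for S (Qperm S).
Proof.
by case/existsP => pi gp; rewrite /Qperm; case: pickP => // /(_ pi); rewrite /Qgood_for gp.
Qed.

Definition Ublock (j : 'I_d) : {set U} := [set x : U | tag x == j].

Lemma card_Ublock (S : {set U}) j : #|S :&: Ublock j| = #|Uslice S j|.
Proof. by rewrite card_Uslice; apply: eq_card => y; rewrite !inE. Qed.

Lemma Uslice_inj (S S' : {set U}) : (forall j, Uslice S j = Uslice S' j) -> S = S'.
Proof.
move=> e; apply/setP => -[j q].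
have : (q \in Uslice S j) = (q \in Uslice S' j) by rewrite e.
by rewrite !inE.
Qed.

Definition Apartner (S : {set U}) : {set U} :=
  [set x : U | (tagged x < a (Qperm S (tag x)) + b (tag x)) && (x \notin S)].

Definition possum (S : {set U}) : nat :=
  \sum_(j < d) \sum_(q in Uslice S j) (q : nat).

Lemma Qgood_eq_of_Apartner (S S' : {set U}) : Qgood S -> Qgood S' ->
  Apartner S :&: S' = set0 -> possum S' <= possum S -> S = S'.
Proof.
move=> /Qgood_Qperm gS /Qgood_Qperm gS' AS' le.
have shift j : \sum_(q in Uslice S j) (q : nat) + #|Uslice S j :\: Uslice S' j| <=
               \sum_(q in Uslice S' j) (q : nat).
  move/forallP: gS => /(_ j) /andP [/subsetP sub /eqP c1].
  move/forallP: gS' => /(_ j) /andP [_ /eqP c2].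
  apply: (@leq_sum_setD_shift _ _ _ (a (Qperm S j) + b j)); first by rewrite c1 c2.
    by move=> q /sub; rewrite inE.
  move=> q; rewrite !inE => qS' lt; apply/negPn/negP => nq.
  have : Tagged (fun i => 'I_(amax a + b i)) q \in Apartner S :&: S'.
    by rewrite !inE /= lt nq.
  by rewrite AS' inE.
have : \sum_(j < d) #|Uslice S j :\: Uslice S' j| == 0.
  rewrite -leqn0 -(leq_add2l (possum S)) addn0; apply: leq_trans le.
  by rewrite /possum -big_split /=; apply: leq_sum => j _; apply: shift.
rewrite sum_nat_eq0 => /forallP S_sub; apply: Uslice_inj => j; apply/eqP.
rewrite eqEcard; move: (S_sub j) => /= /eqP /cards0_eq /eqP; rewrite setD_eq0 => ->.
move/forallP: gS => /(_ j) /andP [_ /eqP ->].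
by move/forallP: gS' => /(_ j) /andP [_ /eqP ->]; rewrite leqnn.
Qed.

Definition Qgood_sorted : seq {set U} := sort (fun S S' => possum S' <= possum S) (enum QS).

Lemma Qgood_sorted_nth i : i < Q a b -> Qgood (nth set0 Qgood_sorted i).
Proof.
move=> lt; have : nth set0 Qgood_sorted i \in Qgood_sorted.
  by rewrite mem_nth // size_sort -cardE.
by rewrite mem_sort mem_enum inE.
Qed.

Lemma pairwise_disjoint_Ublock : pairwise_disjoint Ublock.
Proof.
move=> j k ne; rewrite -setI_eq0; apply/eqP/setP => x; rewrite !inE.
by apply/negP => /andP [/eqP -> /eqP ek]; rewrite ek eqxx in ne.
Qed.

Lemma Apartner_meet_sorted i k : i < k < Q a b ->
  Apartner (nth set0 Qgood_sorted i) :&: nth set0 Qgood_sorted k != set0.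
Proof.
case/andP=> ik kQ; have iQ := ltn_trans ik kQ; apply/negP => /eqP AB.
have size_sorted : size Qgood_sorted = Q a b by rewrite size_sort -cardE.
have srt : sorted (fun S S' => possum S' <= possum S) Qgood_sorted.
  by apply: sort_sorted => S S'; apply: leq_total.
have le := sorted_ltn_nth (fun _ _ _ h1 h2 => leq_trans h2 h1) set0 srt i k.
rewrite !inE size_sorted in le; have {}le := le iQ kQ ik.
move: (Qgood_eq_of_Apartner (Qgood_sorted_nth iQ) (Qgood_sorted_nth kQ) AB le).
move/eqP; rewrite nth_uniq ?sort_uniq ?enum_uniq ?size_sorted // => /eqP eik.
by rewrite eik ltnn in ik.
Qed.

Lemma Q_lower_bound : exists (T : finType) (X : 'I_d -> {set T}) (A B : 'I_(Q a b) -> {set T}),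
  pairwise_disjoint X /\ two_families X a b A B.
Proof.
pose B (i : 'I_(Q a b)) := nth set0 Qgood_sorted i.
exists U, Ublock, (fun i => Apartner (B i)), B.
have gB (i : 'I_(Q a b)) : Qgood_for (B i) (Qperm (B i)).
  exact/Qgood_Qperm/Qgood_sorted_nth.
have coverU (S : {set U}) : S \subset \bigcup_(j < d) Ublock j.
  by apply/subsetP => x _; apply/bigcupP; exists (tag x); rewrite ?inE.
split; first exact: pairwise_disjoint_Ublock.
split; first by move=> i; apply: coverU.
split; first by move=> i; apply: coverU.
split; first by move=> i; rewrite -setI_eq0; apply/eqP/setP => x; rewrite !inE -andbA andNb andbF.
split; first by move=> i k ik; rewrite Apartner_meet_sorted // ik /=.
split; first by move=> i j; rewrite card_Ublock; case/forallP/(_ j)/andP: (gB i) => _ /eqP ->.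
move=> i; exists (Qperm (B i)) => j; rewrite card_Ublock.
have -> : Uslice (Apartner (B i)) j =
    [set q : 'I_(amax a + b j) | q < a (Qperm (B i) j) + b j] :\: Uslice (B i) j.
  by apply/setP => q; rewrite !inE andbC.
case/forallP/(_ j)/andP: (gB i) => /setIidPr sub /eqP cB.
by rewrite cardsD sub cB leq_subLR [b j + _]addnC card_ord_lt.
Qed.

End LowerBound.

Section Points.
Variable T : finType.

Definition code (x : T) : nat := enum_rank x.

(* The l-th element of S (coded by its rank in T) or, for l >= #|S|, a fresh
   code, distinct from every rank, chosen apart by the offset. *)
Definition point (S : {set T}) (off l : nat) : nat :=
  if l < #|S| then nth 0 (map code (enum S)) l else #|T| + off + l.

Lemma code_lt x : code x < #|T|.
Proof. exact: ltn_ord. Qed.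

Lemma point_code (S : {set T}) off l : l < #|S| -> exists2 x, x \in S & point S off l = code x.
Proof.
move=> lt; rewrite /point lt.
have : nth 0 (map code (enum S)) l \in map code (enum S) by rewrite mem_nth // size_map -cardE.
by case/mapP => x; rewrite mem_enum => xS ->; exists x.
Qed.

Lemma point_fresh (S : {set T}) off l : #|S| <= l -> point S off l = #|T| + off + l.
Proof. by rewrite /point ltnNge => ->. Qed.

Lemma point_index (S : {set T}) off x : x \in S -> point S off (index x (enum S)) = code x.
Proof.
move=> xS; have xe : x \in enum S by rewrite mem_enum.
by rewrite /point cardE index_mem xe (nth_map x) ?index_mem // nth_index.
Qed.

Lemma code_neq_fresh (x : T) off l : code x != #|T| + off + l.
Proof. by rewrite neq_ltn -addnA ltn_addr ?code_lt. Qed.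

Lemma point_inj (S : {set T}) off : injective (point S off).
Proof.
move=> l1 l2; case: (ltnP l1 #|S|) => h1; case: (ltnP l2 #|S|) => h2.
- have uq : uniq (map code (enum S)).
    by rewrite map_inj_uniq ?enum_uniq // => x y /val_inj; apply: enum_rank_inj.
  by rewrite /point h1 h2 => /eqP; rewrite nth_uniq ?size_map -?cardE // => /eqP.
- have [x _ ->] := point_code off h1.
  by rewrite point_fresh // => /eqP; rewrite (negbTE (code_neq_fresh _ _ _)).
- have [x _ ->] := point_code off h2.
  by rewrite point_fresh // => /eqP; rewrite eq_sym (negbTE (code_neq_fresh _ _ _)).
by rewrite !point_fresh // => /addnI.
Qed.

Lemma point_disjoint_neq (S S' : {set T}) off off' l l' :
  [disjoint S & S'] -> off + l < off' -> point S off l != point S' off' l'.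
Proof.
move=> dis lt; case: (ltnP l #|S|) => h; case: (ltnP l' #|S'|) => h'.
- have [x xS ->] := point_code off h; have [y yS' ->] := point_code off' h'.
  apply: contraTneq dis => /val_inj /enum_rank_inj exy.
  by apply/pred0Pn; exists x; rewrite /= xS exy.
- by have [x _ ->] := point_code off h; rewrite point_fresh ?code_neq_fresh.
- by have [y _ ->] := point_code off' h'; rewrite point_fresh // eq_sym code_neq_fresh.
rewrite !point_fresh // -!addnA eqn_add2l neq_ltn.
by rewrite (leq_trans lt) ?leq_addr.
Qed.

End Points.

Section UpperBound.
Local Open Scope ring_scope.
Variables (d : nat) (a b : 'I_d -> nat) (T : finType) (X : 'I_d -> {set T}).
Variables (h : nat) (A B : 'I_h -> {set T}) (pis : 'I_h -> {perm 'I_d}).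
Hypothesis A_cover : forall i, A i \subset \bigcup_(j < d) X j.
Hypothesis AB_disjoint : forall i, [disjoint A i & B i].
Hypothesis AB_meet : forall i k : 'I_h, (i < k)%N -> A i :&: B k != set0.
Hypothesis card_BX : forall i j, (#|B i :&: X j| <= b j)%N.
Hypothesis card_AX : forall i j, (#|A i :&: X j| <= a (pis i j))%N.

Local Notation U := (Uspace a b).
Local Notation n := #|U|.
Local Notation A0 := (amax a).

Definition acap i j := a (pis i j).

Lemma acap_le i j : (acap i j <= A0)%N.
Proof. exact: leq_bigmax. Qed.

Definition pointA i j l := point (A i :&: X j) 0 l.
Definition pointB k j l := point (B k :&: X j) A0 l.

(* Block j of [skew_mx i k]: the column in position l is the vector of powers
   of pointA i j l for l < acap i j, the unit vector in row position b_j + l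
   for acap i j <= l < A0, and the vector of powers of pointB k j (l - A0)
   for A0 <= l. *)
Definition Amx i : 'M[rat]_n := \matrix_(r, c)
  if blk r == blk c then
    if (pos c < acap i (blk c))%N then (pointA i (blk c) (pos c))%:R ^+ pos r
    else (pos r == (b (blk c) + pos c)%N)%:R
  else 0.

Definition Bmx k : 'M[rat]_n := \matrix_(r, c)
  if blk r == blk c then (pointB k (blk c) (pos c - A0)%N)%:R ^+ pos r else 0.

Definition skew_mx i k : 'M[rat]_n := \matrix_(r, c) if acol c then Amx i r c else Bmx k r c.

Definition Pmx : 'M[rat]_h := \matrix_(i, k) \det (skew_mx i k).

Lemma Pmx_trig : is_trig_mx Pmx.
Proof.
apply/is_trig_mxP => i k ik; have /set0Pn [x /setIP [xA xB]] := AB_meet ik.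
have /bigcupP [j _ xX] := subsetP (A_cover i) x xA.
have xAX : x \in A i :&: X j by rewrite inE xA.
have xBX : x \in B k :&: X j by rewrite inE xB.
set lA := index x (enum (A i :&: X j)); set lB := index x (enum (B k :&: X j)).
have lAc : (lA < acap i j)%N.
  by apply: leq_trans (card_AX i j); rewrite cardE index_mem mem_enum.
have lAA : (lA < A0)%N := leq_trans lAc (acap_le i j).
have lBb : (lB < b j)%N.
  by apply: leq_trans (card_BX k j); rewrite cardE index_mem mem_enum.
have pA : (lA < A0 + b j)%N by apply: leq_trans lAA (leq_addr _ _).
have pB : (A0 + lB < A0 + b j)%N by rewrite ltn_add2l.
have nB : (A0 + lB < A0)%N = false by rewrite ltnNge leq_addr.
rewrite mxE (@det_eq0_eq_col _ _ _ (ord_of j (Ordinal pA)) (ord_of j (Ordinal pB))) //.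
  apply/negP => /eqP /(congr1 pos); rewrite !pos_ord_of /= => e.
  by rewrite e nB in lAA.
move=> r; rewrite !mxE /acol !blk_ord_of !pos_ord_of /= lAA nB.
by case: eqP => // _; rewrite lAc addKn /pointA /pointB !point_index.
Qed.

Definition block_poly (u : 'rV[rat]_n) j : {poly rat} :=
  \sum_(r | blk r == j) u 0 r *: 'X^(pos r).

Lemma coef_block_poly u j m :
  (block_poly u j)`_m = \sum_(r | blk r == j) u 0 r * (m == pos r)%:R.
Proof. by rewrite coef_sum; apply: eq_bigr => r _; rewrite coefZ coefXn. Qed.

Lemma coef_block_poly_pos u r : (block_poly u (blk r))`_(pos r) = u 0 r.
Proof.
rewrite coef_block_poly (bigD1 r) //= eqxx mulr1 big1 ?addr0 // => r' /andP [/eqP br ne].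
by case: eqP => [e|]; rewrite ?mulr0 //; case/eqP: ne; apply: blk_pos_inj.
Qed.

Lemma size_block_poly u j : (size (block_poly u j) <= A0 + b j)%N.
Proof.
apply/leq_sizeP => m le; rewrite coef_block_poly big1 // => r /eqP br.
case: eqP => [e|]; rewrite ?mulr0 //.
by have := pos_lt r; rewrite br -e ltnNge le.
Qed.

Lemma horner_block_poly u j t :
  (block_poly u j).[t] = \sum_(r | blk r == j) u 0 r * t ^+ pos r.
Proof. by rewrite horner_sum; apply: eq_bigr => r _; rewrite hornerZ hornerXn. Qed.

Lemma mul_skew_mx (u : 'rV[rat]_n) i k c : (u *m skew_mx i k) 0 c =
  let p := block_poly u (blk c) in
  if acol c then
    if (pos c < acap i (blk c))%N then p.[(pointA i (blk c) (pos c))%:R]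
    else p`_(b (blk c) + pos c)%N
  else p.[(pointB k (blk c) (pos c - A0)%N)%:R].
Proof.
rewrite mxE (bigID (fun r => blk r == blk c)) /= [X in _ + X]big1 ?addr0; last first.
  by move=> r /negbTE br; rewrite !mxE br; case: (acol c); rewrite mulr0.
rewrite horner_block_poly coef_block_poly horner_block_poly.
case ac: (acol c); [case: ifP => lt|]; apply: eq_bigr => r /eqP br;
  by rewrite !mxE br eqxx ac ?lt // eq_sym.
Qed.

Lemma mul_skew_mx_ord_of (u : 'rV[rat]_n) i k j l (lt : (l < A0 + b j)%N) :
  (u *m skew_mx i k) 0 (ord_of j (Ordinal lt)) =
  let p := block_poly u j in
  if (l < A0)%N then
    if (l < acap i j)%N then p.[(pointA i j l)%:R] else p`_(b j + l)%N
  else p.[(pointB k j (l - A0)%N)%:R].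
Proof. by rewrite mul_skew_mx /acol blk_ord_of pos_ord_of. Qed.

Section SkewKernel.
Variables (u : 'rV[rat]_n) (i : 'I_h) (j : 'I_d).
Hypothesis u_ker : u *m skew_mx i i = 0.

Lemma size_block_poly_ker : (size (block_poly u j) <= acap i j + b j)%N.
Proof.
apply/leq_sizeP => m le; have [lt|ge] := ltnP m (A0 + b j); last first.
  exact: (leq_sizeP _ _ (size_block_poly u j)).
have bm : (b j <= m)%N by apply: leq_trans (leq_addl _ _) le.
have lt' : (m - b j < A0 + b j)%N by apply: leq_ltn_trans lt; apply: leq_subr.
have mA : (m - b j < A0)%N by rewrite ltn_subLR // addnC lt.
have mc : (m - b j < acap i j)%N = false by rewrite ltnNge leq_subRL // addnC le.
by have := mul_skew_mx_ord_of u i i lt'; rewrite u_ker mxE mA mc subnKC.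
Qed.

Definition block_points : seq nat :=
  [seq pointA i j l | l <- iota 0 (acap i j)] ++ [seq pointB i j l | l <- iota 0 (b j)].

Lemma uniq_block_points : uniq block_points.
Proof.
rewrite cat_uniq !map_inj_uniq ?iota_uniq //=; try exact: point_inj.
rewrite andbT; apply/hasPn => m /mapP [l2 _ ->]; apply/mapP => -[l1].
rewrite mem_iota /= => lc /eqP; apply/negP; rewrite eq_sym /pointA /pointB.
apply: point_disjoint_neq; first exact: disjointW (subsetIl _ _) (subsetIl _ _) (AB_disjoint i).
exact: leq_trans lc (acap_le i j).
Qed.

Lemma root_block_poly_ker m : m \in block_points -> root (block_poly u j) m%:R.
Proof.
rewrite mem_cat => /orP [] /mapP [l]; rewrite mem_iota /= => lt ->.
  have lA : (l < A0)%N := leq_trans lt (acap_le i j).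
  have lAb : (l < A0 + b j)%N by apply: leq_trans lA (leq_addr _ _).
  by have := mul_skew_mx_ord_of u i i lAb; rewrite u_ker mxE lA lt => /esym/eqP.
have lAb : (A0 + l < A0 + b j)%N by rewrite ltn_add2l.
have nA : (A0 + l < A0)%N = false by rewrite ltnNge leq_addr.
by have := mul_skew_mx_ord_of u i i lAb; rewrite u_ker mxE nA addKn => /esym/eqP.
Qed.

Lemma block_poly_ker : block_poly u j = 0.
Proof.
apply/eqP; apply: contraT => p_neq0.
have := max_poly_roots p_neq0 (rs := [seq m%:R : rat | m <- block_points]).
rewrite map_inj_uniq ?uniq_block_points; last exact: mulrIn (oner_neq0 _).
have -> : all (root (block_poly u j)) [seq m%:R : rat | m <- block_points].
  by apply/allP => _ /mapP [m pm ->]; apply: root_block_poly_ker.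
rewrite !size_map size_cat !size_map !size_iota ltnNge size_block_poly_ker.
by move/(_ isT isT).
Qed.

End SkewKernel.

Lemma skew_mx_ker (u : 'rV[rat]_n) i : u *m skew_mx i i = 0 -> u = 0.
Proof.
move=> uM; apply/rowP => r.
by rewrite -coef_block_poly_pos (block_poly_ker _ uM) coef0 mxE.
Qed.

Lemma rank_Pmx : \rank Pmx = h.
Proof.
apply: mxrank_unit; rewrite unitmxE unitfE det_trig ?Pmx_trig //.
apply/prodf_neq0 => i _; rewrite mxE; apply/det0P => -[u /eqP nu0 /skew_mx_ker].
exact: nu0.
Qed.

Local Notation bcols := (bcols a b).
Local Notation QS := [set S : {set U} | Qgood S].

Definition ucol (f : 'I_n -> 'I_n) i : rat := \det (unit_cols acol (Amx i) f).
Definition vrow (f : 'I_n -> 'I_n) k : rat := unit_cols_weight acol (Bmx k) f.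

Lemma Pmx_expand :
  Pmx = \sum_(f : {ffun 'I_n -> 'I_n}) (\col_i ucol f i) *m (\row_k vrow f k).
Proof.
apply/matrixP => i k; rewrite mxE (det_unit_cols_expand acol) summxE.
apply: eq_bigr => f _; rewrite !mxE big_ord1 !mxE mulrC; congr (_ * _).
  by congr (\det _); apply/matrixP => r c; rewrite !mxE; case: ifP => // ->.
by apply: eq_bigr => c _; case: ifP => // N; rewrite mxE N.
Qed.

Lemma vrow_blk (f : 'I_n -> 'I_n) k c : vrow f k != 0 -> c \in bcols -> blk (f c) = blk c.
Proof.
move=> /prodf_neq0 /(_ c isT) + bc; rewrite inE in bc.
by rewrite (negbTE bc) mxE; case: (blk (f c) =P blk c) => // _; rewrite eqxx.
Qed.

Lemma ucol_eq0_not_inj (f : 'I_n -> 'I_n) i : ~~ dinjectiveb f bcols -> ucol f i = 0.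
Proof.
case/dinjectivePn => c1 bc1 [c2 /andP [ne bc2] f12]; rewrite /ucol.
apply: (det_eq0_eq_col (c1 := c1) (c2 := c2)); first by rewrite eq_sym.
move=> r; rewrite !mxE.
by move: bc1 bc2; rewrite !inE => /negbTE -> /negbTE ->; rewrite f12.
Qed.

(* Column c of [unit_cols acol (Amx i) f] then equals the unit column that
   [Amx i] itself has in position pos (f c) - b_j of block j. *)
Lemma ucol_eq0_high (f : 'I_n -> 'I_n) i c : c \in bcols ->
  (acap i (blk (f c)) + b (blk (f c)) <= pos (f c))%N -> ucol f i = 0.
Proof.
move=> bc le; set j := blk (f c) in le.
have bl : (b j <= pos (f c))%N by apply: leq_trans (leq_addl _ _) le.
have lA : (pos (f c) - b j < A0)%N by rewrite ltn_subLR // addnC pos_lt.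
have lt : (pos (f c) - b j < A0 + b j)%N by apply: leq_trans lA (leq_addr _ _).
have lc : (pos (f c) - b j < acap i j)%N = false.
  by rewrite ltnNge leq_subRL // addnC le.
rewrite inE in bc; apply: (@det_eq0_eq_col _ _ _ (ord_of j (Ordinal lt)) c).
  by apply: contraNneq bc => <-; rewrite /acol pos_ord_of.
move=> r; rewrite !mxE (negbTE bc) /acol blk_ord_of pos_ord_of /= lA lc (subnKC bl).
have [-> | ne] := eqVneq r (f c); first by rewrite !eqxx.
case: eqP => // br; case: eqP => // pr.
by case/eqP: ne; apply: blk_pos_inj.
Qed.

Lemma Qgood_image (f : 'I_n -> 'I_n) i :
  {in bcols &, injective f} -> {in bcols, forall c, blk (f c) = blk c} ->
  {in bcols, forall c, pos (f c) < acap i (blk (f c)) + b (blk (f c))}%N ->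
  Qgood ([set elt (f c) | c in bcols] : {set U}).
Proof.
move=> finj fblk low; apply/existsP; exists (pis i); apply/forallP => j.
apply/andP; split.
  apply/subsetP => q; rewrite !inE => /imsetP [c bc e].
  by have := low c bc; rewrite /blk /pos -e /acap.
rewrite card_Uslice -(card_bcols_blk a b j) -(card_in_imset (f := elt \o f)); last first.
  by move=> c1 c2 /setIdP [b1 _] /setIdP [b2 _] /enum_val_inj; apply: finj.
apply/eqP/eq_card => y; rewrite inE; apply/andP/imsetP => [[/imsetP [c bc ->] /eqP bj]|].
  by exists c; rewrite // inE bc -fblk //; apply/eqP.
case=> c /setIdP [bc /eqP bj] ->; split; first exact: imset_f.
by apply/eqP; rewrite -bj -fblk.
Qed.

Definition Gmx : 'M[rat]_(h, #|QS|) := \matrix_(i, s)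
  if [pick g : {ffun 'I_n -> 'I_n} |
        dinjectiveb g bcols && ([set elt (g c) | c in bcols] == enum_val s)]
  is Some g then ucol g i else 0.

Lemma ucol_Gmx (f : {ffun 'I_n -> 'I_n}) (S : {set U}) (SQ : S \in QS) :
  {in bcols &, injective f} -> [set elt (f c) | c in bcols] = S ->
  exists e, forall i, ucol f i = e * Gmx i (enum_rank_in SQ S).
Proof.
move=> finj fS; set s := enum_rank_in SQ S.
have sS : enum_val s = S := enum_rankK_in SQ SQ.
have Gs i : Gmx i s = if [pick g : {ffun 'I_n -> 'I_n} |
    dinjectiveb g bcols && ([set elt (g c) | c in bcols] == enum_val s)]
  is Some g then ucol g i else 0 by rewrite mxE.
move: Gs; case: pickP => [g /andP [_ /eqP gS] | none] Gs; last first.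
  by have := none f; rewrite sS fS eqxx andbT => /dinjectiveP.
have fg : f @: bcols = g @: bcols.
  by apply: (imset_inj (@enum_val_inj _ _)); rewrite -!imset_comp; rewrite gS sS fS.
have [e He] := det_unit_cols_image rat finj fg.
by exists e => i; rewrite Gs /ucol He.
Qed.

Lemma col_ucol_in_Gmx (f : {ffun 'I_n -> 'I_n}) k : vrow f k != 0 ->
  exists x : 'cV[rat]_#|QS|, \col_i ucol f i = Gmx *m x.
Proof.
move=> vk; have fblk c := @vrow_blk f k c vk.
have zero : (forall i, ucol f i = 0) -> exists x : 'cV[rat]_#|QS|, \col_i ucol f i = Gmx *m x.
  by move=> z; exists 0; apply/colP => i; rewrite mulmx0 !mxE z.
have [finj|nf] := boolP (dinjectiveb f bcols); last first.
  by apply: zero => i; apply: ucol_eq0_not_inj.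
have [hit | /forallPn [i0 /exists_inPn fit]] :=
  boolP [forall i, exists c in bcols, acap i (blk (f c)) + b (blk (f c)) <= pos (f c)]%N.
  apply: zero => i; have /exists_inP [c bc le] := forallP hit i.
  exact: ucol_eq0_high bc le.
have SQ : [set elt (f c) | c in bcols] \in QS.
  rewrite inE; apply: (Qgood_image (i := i0)) => [|c bc|c bc].
  - exact/dinjectiveP.
  - exact: fblk.
  - by rewrite ltnNge fit.
have [e He] := ucol_Gmx SQ (dinjectiveP _ _ finj) erefl.
exists (e *: delta_mx (enum_rank_in SQ [set elt (f c) | c in bcols]) 0).
apply/colP => i; rewrite -scalemxAr -colE [LHS]mxE He.
by rewrite [RHS]mxE [col _ _ _ _]mxE.
Qed.

Lemma Q_upper_bound : (h <= #|QS|)%N.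
Proof.
have [H PGH] : exists H, Pmx = Gmx *m H.
  rewrite Pmx_expand; apply: (big_ind (fun Y => exists H, Y = Gmx *m H)).
  - by exists 0; rewrite mulmx0.
  - by move=> _ _ [H1 ->] [H2 ->]; exists (H1 + H2); rewrite mulmxDr.
  move=> f _; case: (pickP (fun k => vrow f k != 0)) => [k vk | v0].
    by have [x ->] := col_ucol_in_Gmx vk; exists (x *m \row_k vrow f k); rewrite mulmxA.
  exists 0; apply/matrixP => i k; rewrite mulmx0 !mxE big_ord1 !mxE.
  by move/negbFE/eqP: (v0 k) => ->; rewrite mulr0.
by rewrite -rank_Pmx PGH (leq_trans (mxrankM_maxl _ _) (rank_leq_col _)).
Qed.

End UpperBound.

Theorem theorem1 (d : nat) (a b : 'I_d -> nat) :
  (forall (T : finType) (X : 'I_d -> {set T}) (h : nat) (A B : 'I_h -> {set T}),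
      pairwise_disjoint X -> two_families X a b A B -> h <= Q a b)
  /\
  (exists (T : finType) (X : 'I_d -> {set T}) (A B : 'I_(Q a b) -> {set T}),
      pairwise_disjoint X /\ two_families X a b A B).
Proof.
split; last exact: Q_lower_bound.
(* The bound holds even when the X_j overlap. *)
move=> T X h A B _ [A_cover [_ [AB_disjoint [AB_meet [card_BX card_A]]]]].
have [pis card_AX] := fin_all_exists card_A.
exact: Q_upper_bound A_cover AB_disjoint AB_meet card_BX card_AX.
Qed.
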